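(* For every model $\rho$, every $n \geq 1$, $\phi$, $\phi_1$ and $\phi_2$, and every $1 < i \leq |\rho|$, the following hold: 1. $(\rho, i) \models \phi_1 \mathrel{\mathbb{S}}_n \phi_2$ iff $(\rho, i) \models \phi_2$, or $(\rho, i) \models \phi_1$ and $(\rho, i-1) \models \phi_1 \mathrel{\mathbb{S}}_n \phi_2$ and $n - (\tau_i - \tau_{i-1}) \geq \mathfrak{m}(\rho, i-1, \phi_1 \mathrel{\mathbb{S}}_n \phi_2).$ 2. $(\rho, i) \models \mathsf{P}^{<}_n \phi$ iff $(\rho, i - 1) \models \phi$ and $\tau_i - \tau_{i-1} < n$, or $(\rho, i-1) \models \mathsf{P}^{<}_n \phi$ and $n - (\tau_i - \tau_{i-1}) \geq \mathfrak{m}(\rho, i-1, \mathsf{P}^{<}_n \phi).$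
   Context: A model is $\rho=(\pi,\tau)$ with $\pi$ a finite sequence of states and $\tau$ a non-decreasing sequence of natural-number timestamps, $|\pi|=|\tau|=|\rho|$. Semantics: $(\rho,i)\models\mathsf{P}^{<}_n\phi$ (strict metric past ''once'') iff $i>1$ and there is $j<i$ with $(\rho,j)\models\phi$ and $\tau_i-\tau_j<n$; $(\rho,i)\models\phi_1\mathrel{\mathbb{S}}_n\phi_2$ iff there is $j\le i$ with $(\rho,j)\models\phi_2$, $(\rho,k)\models\phi_1$ for all $j<k\le i$, and $\tau_i-\tau_j<n$. It is known (minimality) that if $(\rho,i)\models\phi_1\mathrel{\mathbb{S}}_n\phi_2$ (resp. $\mathsf{P}^{<}_n\phi$) then there is a least $m\le n$ such that $(\rho,i)\models\phi_1\mathrel{\mathbb{S}}_m\phi_2$ (resp. $\mathsf{P}^{<}_m\phi$), i.e. it fails for every $0<k<m$. The function $\mathfrak{m}(\rho,i,\psi)$ equals this least $m$ if $\psi$ is of the form $\phi_1\mathrel{\mathbb{S}}_n\phi_2$ or $\mathsf{P}^{<}_n\phi'$ and $(\rho,i)\models\psi$, and $0$ otherwise. *)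

From mathcomp Require Import all_boot all_order all_algebra.
Set Implicit Arguments. Unset Strict Implicit. Unset Printing Implicit Defensive.

(* A model rho = (pi, tau): a finite sequence of states and a non-decreasing
   sequence of natural-number timestamps of the same length.
   Positions are 1-indexed: position i refers to nth _ pi (i-1). *)
Record model (S : Type) := Model {
  mstates : seq S;
  mstamps : seq nat;
  size_pi_tau : size mstates = size mstamps;
  tau_nondecr : sorted leq mstamps }.

Definition ts (S : Type) (rho : model S) (i : nat) : nat := nth 0 (mstamps rho) i.-1.

Inductive mformula (S : Type) :=
| FTrue
| Atom of pred S
| Neg of mformula S
| And of mformula S & mformula S
| Since of nat & mformula S & mformula S
| Once of nat & mformula S.

Arguments FTrue {S}.

Fixpoint sat (S : Type) (rho : model S) (f : mformula S) (i : nat) : bool :=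
  match f with
  | FTrue => true
  | Atom p => if mstates rho is x0 :: _ then p (nth x0 (mstates rho) i.-1) else false
  | Neg g => ~~ sat rho g i
  | And g h => sat rho g i && sat rho h i
  | Since n f1 f2 =>
      has (fun j => [&& sat rho f2 j,
                        all (fun k => sat rho f1 k) (iota j.+1 (i - j))
                      & ts rho i - ts rho j < n]) (iota 1 i)
  | Once n g =>
      (1 < i) && has (fun j => sat rho g j && (ts rho i - ts rho j < n))
                     (iota 1 i.-1)
  end.

(* The minimality function m(rho, i, psi): the least m such that
   (rho,i) |= psi with its bound replaced by m, when psi is a Since/Once
   formula satisfied at i; 0 otherwise.  (find over iota 0 (n+1) returns the
   least such m, which is <= n by minimality.) *)
Definition mfun (S : Type) (rho : model S) (i : nat) (psi : mformula S) : nat :=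
  match psi with
  | Since n f1 f2 =>
      if sat rho psi i then find (fun m => sat rho (Since m f1 f2) i) (iota 0 n.+1)
      else 0
  | Once n g =>
      if sat rho psi i then find (fun m => sat rho (Once m g) i) (iota 0 n.+1)
      else 0
  | _ => 0
  end.

(* Both recurrences come from splitting the witness j of the past operator:
   either j is the current position (resp. the previous one for P^<), or j
   lies strictly before and then tau_i - tau_j = (tau_i - tau_(i-1)) +
   (tau_(i-1) - tau_j), so the formula holds at i-1 with its bound lowered by
   d = tau_i - tau_(i-1).  By monotonicity in the bound, holding with bound
   n - d is the same as the minimal bound m(rho, i-1, psi) being at most n - d. *)

From mathcomp Require Import all_boot all_order all_algebra.
From mathcomp Require Import zify.

Set Implicit Arguments.
Unset Strict Implicit.

Lemma find_iota_monotone_le (W : pred nat) (N k : nat) :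
  (forall m m', (m <= m')%N -> W m -> W m') -> (k <= N)%N ->
  (find W (iota 0 N.+1) <= k)%N = W k.
Proof.
move=> W_mono kN; apply/idP/idP.
- move=> findk; have hasW : has W (iota 0 N.+1) by rewrite has_find size_iota; lia.
  have := nth_find 0 hasW; rewrite nth_iota; last by move: hasW; rewrite has_find size_iota.
  exact: W_mono.
- move=> Wk; rewrite leqNgt; apply/negP => /(before_find 0).
  by rewrite nth_iota // Wk.
Qed.

Section Semantics.

Variables (S : Type) (rho : model S).

Lemma ts_mono (j k : nat) :
  (1 <= j)%N -> (j <= k)%N -> (k <= size (mstates rho))%N ->
  (ts rho j <= ts rho k)%N.
Proof.
move=> j1 jk ks; rewrite /ts.
apply: (sorted_leq_nth leq_trans leqnn 0 (tau_nondecr rho)); rewrite ?inE -?size_pi_tau; lia.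
Qed.

Lemma sinceP (n : nat) (f1 f2 : mformula S) (i : nat) :
  sat rho (Since n f1 f2) i <->
  exists j, [/\ (1 <= j <= i)%N, sat rho f2 j,
                (forall k, (j < k <= i)%N -> sat rho f1 k)
              & (ts rho i - ts rho j < n)%N].
Proof.
split => /=.
- case/hasP => j; rewrite mem_iota => ji /and3P [f2j /allP f1_after tsj].
  exists j; split => // k kr; apply: f1_after; rewrite mem_iota; lia.
- case=> j [ji f2j f1_after tsj]; apply/hasP; exists j; first by rewrite mem_iota; lia.
  apply/and3P; split => //; apply/allP => k; rewrite mem_iota => kr; apply: f1_after; lia.
Qed.

Lemma onceP (n : nat) (g : mformula S) (i : nat) :
  sat rho (Once n g) i <->
  exists j, [/\ (1 <= j < i)%N, sat rho g j & (ts rho i - ts rho j < n)%N].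
Proof.
split => /=.
- case/andP => i1 /hasP [j]; rewrite mem_iota => ji /andP [gj tsj].
  by exists j; split => //; lia.
- case=> j [ji gj tsj]; apply/andP; split; first lia.
  by apply/hasP; exists j; [rewrite mem_iota; lia | apply/andP].
Qed.

Lemma sat_Since_mono (m m' : nat) (f1 f2 : mformula S) (i : nat) :
  (m <= m')%N -> sat rho (Since m f1 f2) i -> sat rho (Since m' f1 f2) i.
Proof.
move=> mm' /sinceP [j [ji f2j f1_after tsj]].
by apply/sinceP; exists j; split => //; lia.
Qed.

Lemma sat_Once_mono (m m' : nat) (g : mformula S) (i : nat) :
  (m <= m')%N -> sat rho (Once m g) i -> sat rho (Once m' g) i.
Proof.
move=> mm' /onceP [j [ji gj tsj]].
by apply/onceP; exists j; split => //; lia.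
Qed.

Lemma sat_Since0 (f1 f2 : mformula S) (i : nat) : ~ sat rho (Since 0 f1 f2) i.
Proof. by case/sinceP => j [_ _ _]. Qed.

Lemma sat_Once0 (g : mformula S) (i : nat) : ~ sat rho (Once 0 g) i.
Proof. by case/onceP => j [_ _]. Qed.

(* When d > n the truncated n - d is 0, an unsatisfiable bound, matching the
   negative integer bound on the left. *)
Lemma mfun_Since_le_sub (n d : nat) (f1 f2 : mformula S) (i : nat) :
  sat rho (Since n f1 f2) i ->
  ((mfun rho i (Since n f1 f2))%:Z <= n%:Z - d%:Z)%R <->
  sat rho (Since (n - d) f1 f2) i.
Proof.
rewrite /mfun => -> ; have [dn | nd] := leqP d n.
- have := @find_iota_monotone_le (fun m => sat rho (Since m f1 f2) i) n (n - d).
  move=> /(_ (fun m m' => @sat_Since_mono m m' f1 f2 i) (leq_subr d n)) /= <-.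
  by split; lia.
- have -> : n - d = 0 by lia.
  by split => [|/sat_Since0 //]; lia.
Qed.

Lemma mfun_Once_le_sub (n d : nat) (g : mformula S) (i : nat) :
  sat rho (Once n g) i ->
  ((mfun rho i (Once n g))%:Z <= n%:Z - d%:Z)%R <-> sat rho (Once (n - d) g) i.
Proof.
rewrite /mfun => -> ; have [dn | nd] := leqP d n.
- have := @find_iota_monotone_le (fun m => sat rho (Once m g) i) n (n - d).
  move=> /(_ (fun m m' => @sat_Once_mono m m' g i) (leq_subr d n)) /= <-.
  by split; lia.
- have -> : n - d = 0 by lia.
  by split => [|/sat_Once0 //]; lia.
Qed.

Section Step.

Variable i : nat.
Hypotheses (i_gt1 : (1 < i)%N) (i_le_size : (i <= size (mstates rho))%N).

Let tsj_le (j : nat) : (1 <= j)%N -> (j <= i.-1)%N ->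
  (ts rho j <= ts rho i.-1 <= ts rho i)%N.
Proof. by move=> j1 ji; rewrite !ts_mono //; lia. Qed.

Lemma sat_Since_step (n : nat) (f1 f2 : mformula S) : (0 < n)%N ->
  sat rho (Since n f1 f2) i <->
  sat rho f2 i \/
  sat rho f1 i /\ sat rho (Since (n - (ts rho i - ts rho i.-1)) f1 f2) i.-1.
Proof.
move=> n_gt0; split.
- case/sinceP => j [ji f2j f1_after tsj].
  have [<- | ne_ji] := eqVneq j i; [by left | right].
  have /andP[? ?] := @tsj_le j ltac:(lia) ltac:(lia).
  split; first by apply: f1_after; lia.
  apply/sinceP; exists j; split => //; [lia | move=> k kr; apply: f1_after | ]; lia.
- case => [f2i | [f1i /sinceP [j [ji f2j f1_after tsj]]]].
    by apply/sinceP; exists i; split => // [|k|]; lia.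
  have /andP[? ?] := @tsj_le j ltac:(lia) ltac:(lia).
  apply/sinceP; exists j; split => //; [lia | | lia].
  move=> k kr; have [-> // | ne_ki] := eqVneq k i.
  by apply: f1_after; lia.
Qed.

Lemma sat_Once_step (n : nat) (g : mformula S) :
  sat rho (Once n g) i <->
  (sat rho g i.-1 /\ (ts rho i - ts rho i.-1 < n)%N) \/
  sat rho (Once (n - (ts rho i - ts rho i.-1)) g) i.-1.
Proof.
split.
- case/onceP => j [ji gj tsj].
  have [<- | ne_ji] := eqVneq j i.-1; [by left | right].
  have /andP[? ?] := @tsj_le j ltac:(lia) ltac:(lia).
  by apply/onceP; exists j; split => //; lia.
- case => [[gi tsd] | /onceP [j [ji gj tsj]]].
    by apply/onceP; exists i.-1; split => //; lia.
  have /andP[? ?] := @tsj_le j ltac:(lia) ltac:(lia).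
  by apply/onceP; exists j; split => //; lia.
Qed.

End Step.

End Semantics.

Theorem theorem1 (St : Type) (rho : model St) (n : nat) (phi phi1 phi2 : mformula St)
    (i : nat) :
  (1 <= n)%N -> (1 < i)%N -> (i <= size (mstates rho))%N ->
  (sat rho (Since n phi1 phi2) i <->
     sat rho phi2 i \/
     [/\ sat rho phi1 i, sat rho (Since n phi1 phi2) i.-1
       & ((mfun rho i.-1 (Since n phi1 phi2))%:Z
            <= n%:Z - (ts rho i - ts rho i.-1)%:Z)%R])
  /\
  (sat rho (Once n phi) i <->
     (sat rho phi i.-1 /\ (ts rho i - ts rho i.-1 < n)%N) \/
     (sat rho (Once n phi) i.-1 /\
      ((mfun rho i.-1 (Once n phi))%:Z
            <= n%:Z - (ts rho i - ts rho i.-1)%:Z)%R)).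
Proof.
move=> n_gt0 i_gt1 i_le_size; set d := ts rho i - ts rho i.-1.
split.
- rewrite sat_Since_step //; split => -[f2i | [f1i hprev]]; try by left.
  + right; have hprev' := sat_Since_mono (leq_subr d n) hprev.
    by split => //; apply/(mfun_Since_le_sub _ hprev').
  + by right; split => //; apply/(mfun_Since_le_sub _ hprev).
- rewrite sat_Once_step //; split => -[hnow | hprev]; try by left.
  + right; have hprev' := sat_Once_mono (leq_subr d n) hprev.
    by split => //; apply/(mfun_Once_le_sub _ hprev').
  + by case: hprev => hprev /(mfun_Once_le_sub _ hprev); right.
Qed.
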